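(* Let $n\geq2$ and let $A=(a_{i,j})$ be a nonnegative $2\times n$ matrix with $a_{2,k}=0$ for $2\leq k\leq n$. Let $A'=(a'_{i,j})$ be the $2\times n$ matrix with $a'_{1,1}=\sum_{k=1}^n a_{1,k}$, $a'_{1,k}=0$ for $2\le k\le n$, $a'_{2,1}=a_{2,1}-\sum_{k=2}^n a_{1,k}$, and $a'_{2,k}=a_{1,k}$ for $2\leq k\leq n$. If $\sum_{k=2}^n a_{1,k}\leq a_{2,1}\leq\sum_{k=1}^n a_{1,k}$, then $H(A)\geq H(A')$.
   Context: For a nonnegative matrix $A$, $H(A)=-\sum_{i,j}a_{i,j}\log a_{i,j}$ with the convention $0\log0=0$. *)

From mathcomp Require Import all_boot all_order all_algebra.
From mathcomp Require Import all_classical all_reals all_analysis.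
Set Implicit Arguments. Unset Strict Implicit. Unset Printing Implicit Defensive.
Import Order.TTheory GRing.Theory Num.Theory.
Local Open Scope ring_scope.

Definition xlogx (R : realType) (x : R) : R := if x == 0 then 0 else x * ln x.

Definition Hent (R : realType) (m n : nat) (A : 'M[R]_(m, n)) : R :=
  - \sum_(i < m) \sum_(j < n) xlogx (A i j).

(* The transformed matrix A' (indices 0-based: row 0 = row 1 of the paper). *)
Definition transf (R : realType) (n : nat) (A : 'M[R]_(2, n.+1)) : 'M[R]_(2, n.+1) :=
  \matrix_(i < 2, j < n.+1)
    if i == 0 then
      (if j == ord0 then \sum_(k < n.+1) A 0 k else 0)
    else
      (if j == ord0 then A 1 ord0 - \sum_(k < n.+1 | k != ord0) A 0 k
       else A 0 j).

From mathcomp Require Import all_boot all_order all_algebra.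
From mathcomp Require Import all_classical all_reals all_analysis.
From mathcomp Require Import lra.
Import Order.TTheory GRing.Theory Num.Theory.
Local Open Scope ring_scope.

(* The transformation only changes the first column, moving the mass
   s = a_{1,2} + ... + a_{1,n} from a_{2,1} up to a_{1,1}; the other entries are
   merely permuted between the two rows.  Since x log x is convex, its
   increments over an interval of length s grow with the left endpoint, and
   a_{2,1} - s <= a_{1,1} gives x log x (a_{2,1}) - x log x (a_{2,1} - s) <=
   x log x (a_{1,1} + s) - x log x (a_{1,1}), which is H(A) >= H(A'). *)

Section IncreasingIncrements.
Variables (R : realType) (f g : R -> R).
Hypothesis f_ge_tangent : forall u v, 0 <= u -> 0 < v -> f v + g v * (u - v) <= f u.
Hypothesis g_homo : forall u v, 0 < u -> u <= v -> g u <= g v.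

Lemma le_increment (x a s : R) : 0 <= x -> x <= a -> 0 <= s ->
  f (x + s) - f x <= f (a + s) - f a.
Proof.
move=> x_ge0 le_xa s_ge0.
have [->|s_neq0] := eqVneq s 0; first by rewrite !addr0 !subrr.
have s_gt0 : 0 < s by rewrite lt0r s_neq0.
have xs_gt0 : 0 < x + s by lra.
have [le_xs_a|lt_a_xs] := lerP (x + s) a.
- have a_gt0 : 0 < a by lra.
  have := @f_ge_tangent (a + s) a (addr_ge0 (ltW a_gt0) s_ge0) a_gt0.
  have := @f_ge_tangent x (x + s) x_ge0 xs_gt0.
  have : g (x + s) * s <= g a * s by rewrite ler_pM2r // g_homo.
  lra.
- have [a0|a_neq0] := eqVneq a 0.
    have x0 : x = 0 by lra.
    by rewrite x0 a0.
  have a_gt0 : 0 < a by rewrite lt0r a_neq0 (le_trans x_ge0 le_xa).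
  have := @f_ge_tangent (a + s) (x + s) (addr_ge0 (ltW a_gt0) s_ge0) xs_gt0.
  have := @f_ge_tangent x a x_ge0 a_gt0.
  have : g a * (a - x) <= g (x + s) * (a - x).
    by rewrite ler_wpM2r ?subr_ge0 // g_homo // ltW.
  lra.
Qed.

End IncreasingIncrements.

Lemma xlogx0 (R : realType) : xlogx (0 : R) = 0.
Proof. by rewrite /xlogx eqxx. Qed.

Lemma xlogx_ge_tangent (R : realType) (u v : R) : 0 <= u -> 0 < v ->
  xlogx v + (1 + ln v) * (u - v) <= xlogx u.
Proof.
move=> u_ge0 v_gt0.
have [->|u_neq0] := eqVneq u 0.
  by rewrite xlogx0 /xlogx (negbTE (lt0r_neq0 v_gt0)); lra.
have u_gt0 : 0 < u by rewrite lt0r u_neq0.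
rewrite /xlogx (negbTE u_neq0) (negbTE (lt0r_neq0 v_gt0)).
(* ln (v / u) <= v / u - 1, multiplied by u *)
have : ln (1 + (v / u - 1)) <= v / u - 1.
  by apply: le_ln1Dx; rewrite ltrBrDl addrN divr_gt0.
rewrite addrC subrK ln_div ?posrE // => /(ler_wpM2l (ltW u_gt0)).
rewrite !mulrBr mulrCA divff ?mulr1 ?lt0r_neq0 //.
nra.
Qed.

Lemma xlogx_le_increment (R : realType) (x a s : R) : 0 <= x -> x <= a -> 0 <= s ->
  xlogx (x + s) - xlogx x <= xlogx (a + s) - xlogx a.
Proof.
apply: le_increment => [u v|u v u_gt0 le_uv]; first exact: xlogx_ge_tangent.
by rewrite lerD2l ler_ln ?posrE // (lt_le_trans u_gt0).
Qed.

Lemma sum_ord2 (V : nmodType) (F : 'I_2 -> V) : \sum_(i < 2) F i = F 0 + F 1.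
Proof. by rewrite big_ord_recl big_ord1; congr (_ + F _); apply: val_inj. Qed.

Lemma Hent_col0 (R : realType) (m n : nat) (A : 'M[R]_(m, n.+1)) :
  Hent A = - (\sum_(i < m) xlogx (A i ord0)
              + \sum_(j < n.+1 | j != ord0) \sum_(i < m) xlogx (A i j)).
Proof. by rewrite /Hent exchange_big (bigD1 ord0). Qed.

Theorem lemma2p1 (R : realType) (n : nat) (A : 'M[R]_(2, n.+1)) :
  (1 <= n)%N ->
  (forall i j, 0 <= A i j) ->
  (forall k : 'I_n.+1, k != ord0 -> A 1 k = 0) ->
  \sum_(k < n.+1 | k != ord0) A 0 k <= A 1 ord0 ->
  A 1 ord0 <= \sum_(k < n.+1) A 0 k ->
  Hent (transf A) <= Hent A.
Proof.
move=> _ A_ge0 A1_eq0 le_s_b le_b_as.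
set s := \sum_(k < n.+1 | k != ord0) A 0 k in le_s_b *.
have sumA0 : \sum_(k < n.+1) A 0 k = A 0 ord0 + s by rewrite (bigD1 ord0).
rewrite sumA0 in le_b_as.
have same_tail : \sum_(j < n.+1 | j != ord0) \sum_(i < 2) xlogx (transf A i j)
               = \sum_(j < n.+1 | j != ord0) \sum_(i < 2) xlogx (A i j).
  apply: eq_bigr => j /negbTE j_neq0.
  by rewrite !sum_ord2 !mxE /= j_neq0 A1_eq0 ?j_neq0 // xlogx0 addrC.
rewrite !Hent_col0 same_tail lerN2 lerD2r !sum_ord2 !mxE /=.
rewrite -/s sumA0.
have s_ge0 : 0 <= s by apply: sumr_ge0 => k _; apply: A_ge0.
have := @xlogx_le_increment R (A 1 ord0 - s) (A 0 ord0) s.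
rewrite subrK subr_ge0 lerBlDr => /(_ le_s_b le_b_as s_ge0).
lra.
Qed.
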